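(* Let $\mathcal{G}$ be a signed digraph with signed Laplacian $L$. (1) If $L$ has corank $1$, then $\mathcal{G}$ has a rooted spanning tree. (2) If $-L$ is EEP, or if $L$ is weight balanced and of corank $1$, then $L$ is irreducible (equivalently, $\mathcal{G}$ is strongly connected).
   Context: A signed digraph is $\mathcal{G}=(\mathcal{V},\mathcal{E},A)$ with $\mathcal{V}=\{1,\dots,n\}$, real weighted adjacency matrix $A$ (entries of any sign), and $A_{ij}\neq0$ iff $(j,i)\in\mathcal{E}$ is a directed edge from $j$ to $i$. Its signed Laplacian is $L=\Sigma-A$ with $\Sigma=\mathrm{diag}(\sigma_i)$, $\sigma_i=\sum_jA_{ij}$. $\mathcal{G}$ has a rooted spanning tree if there is a node $j$ from which every node can be reached by a directed path of edges in $\mathcal{E}$; $\mathcal{G}$ is strongly connected if every node can be reached from every other node. $L$ is irreducible if there is no permutation matrix $P$ with $P^\top LP$ block upper triangular with two nontrivial square diagonal blocks. Weight balanced means $L^\top\mathbf{1}=0$. $M$ is EEP if there is $t_0\ge0$ with $e^{Mt}$ entrywise positive for all $t\ge t_0$. Corank means dimension of the kernel. *)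

From HB Require Import structures.
From mathcomp Require Import all_boot all_order all_algebra all_fingroup.
From mathcomp Require Import all_classical all_reals all_analysis.
Set Implicit Arguments. Unset Strict Implicit. Unset Printing Implicit Defensive.
Import Order.TTheory GRing.Theory Num.Theory.
Local Open Scope ring_scope.

Section SignedDigraph.
Variables (R : realType) (n : nat).

Definition edge (A : 'M[R]_n) : rel 'I_n := fun j i => A i j != 0.

Definition laplacian (A : 'M[R]_n) : 'M[R]_n :=
  \matrix_(i, j) ((i == j)%:R * (\sum_(k < n) A i k) - A i j).

Definition has_rooted_spanning_tree (A : 'M[R]_n) : Prop :=
  exists r : 'I_n, forall i : 'I_n, connect (edge A) r i.

Definition strongly_connected (A : 'M[R]_n) : Prop :=
  forall i j : 'I_n, connect (edge A) i j.

Definition corank (M : 'M[R]_n) : nat := (n - \rank M)%N.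

Definition weight_balanced (L : 'M[R]_n) : Prop :=
  forall j : 'I_n, \sum_(i < n) L i j = 0.

(* Irreducible: no permutation P such that P^T L P is block upper triangular
   with two nontrivial square diagonal blocks (sizes k and n-k, 0<k<n),
   i.e. the lower-left (n-k) x k block vanishes. *)
Definition irreducible_mx (L : 'M[R]_n) : Prop :=
  ~ exists (s : 'S_n) (k : nat), [/\ (0 < k)%N, (k < n)%N &
      forall i j : 'I_n, (k <= i)%N -> (j < k)%N -> L (s i) (s j) = 0].

Definition expmx_entry (M : 'M[R]_n) (t : R) (i j : 'I_n) : R :=
  limn (fun N : nat => \sum_(k < N) (t ^+ k / (k`!)%:R) * (M ^+ k) i j).

Definition EEP (M : 'M[R]_n) : Prop :=
  exists t0 : R, 0 <= t0 /\
    forall t : R, t0 <= t -> forall i j : 'I_n, 0 < expmx_entry M t i j.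

End SignedDigraph.

From HB Require Import structures.
From mathcomp Require Import all_boot all_order all_algebra all_fingroup.
From mathcomp Require Import all_classical all_reals all_analysis.
Import Order.TTheory GRing.Theory Num.Theory.
Local Open Scope ring_scope.
Set Implicit Arguments. Unset Strict Implicit.

(* A set S of nodes containing all ancestors of its members is closed for the
   Laplacian (L i j = 0 for i in S, j outside S), so the rows of L indexed by S,
   restricted to S, still sum to zero; this yields a nonzero left null vector of
   L supported on S. When L has corank 1 all left null vectors are proportional.
   Comparing the vector supported on the ancestors of a node x whose ancestor
   set is minimal with the one supported on the ancestors of any node i forces x
   to be an ancestor of i, so x is a root. If L is moreover weight balanced, the
   all-ones row is a left null vector with full support, so every ancestor set
   is the whole node set. Under EEP, if i does not reach j then every power of
   -L vanishes at (j, i), hence so does e^{-Lt}. Finally a strongly connected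
   digraph admits no closed proper node set, which is what a block triangular
   form of L would provide. *)

Section LeftKernel.
Variables (F : fieldType) (n : nat).
Implicit Types (L P : 'M[F]_n).

Lemma left_kernel_colinear m (L : 'M[F]_(m, n)) (u v : 'rV[F]_m) :
  (m - \rank L)%N = 1%N -> u != 0 -> u *m L = 0 -> v *m L = 0 ->
  exists a, v = a *: u.
Proof.
move=> corank1 u_neq0 uL0 vL0.
have u_ker : (u <= kermx L)%MS by rewrite sub_kermx uL0.
have /andP[_ ker_u] : (u == kermx L)%MS.
  by rewrite -(mxrank_leqif_eq u_ker).2 mxrank_ker corank1 rank_rV u_neq0.
by apply/sub_rVP; apply: submx_trans ker_u; rewrite sub_kermx vL0.
Qed.

Lemma left_kernel_supported L P (x : 'cV[F]_n) :
  P *m P = P -> P *m L *m (1 - P) = 0 -> L *m x = 0 -> P *m x != 0 ->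
  exists2 w : 'rV[F]_n, w != 0 & w *m L = 0 /\ w *m P = w.
Proof.
move=> P2 PLQ0 Lx0 Px_neq0.
(* K kills P x, so it is singular; a left null vector of K is one of L fixed by P. *)
pose K := P *m L + (1 - P).
have QP0 : (1 - P) *m P = 0 by rewrite mulmxBl mul1mx P2 subrr.
have KPx0 : K *m (P *m x) = 0.
  have PLP : P *m L *m P = P *m L.
    by apply/esym/eqP; rewrite -subr_eq0 -[X in X - _]mulmx1 -mulmxBr PLQ0.
  by rewrite /K mulmxDl !mulmxA PLP QP0 mul0mx addr0 -mulmxA Lx0 mulmx0.
have /det0P[z z_neq0 zK0] : \det K == 0.
  rewrite -det_tr; apply/det0P; exists (P *m x)^T; first by rewrite trmx_eq0.
  by rewrite -trmx_mul KPx0 trmx0.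
have zQ0 : z *m (1 - P) = 0.
  have QQ : (1 - P) *m (1 - P) = 1 - P by rewrite mulmxBr mulmx1 QP0 subr0.
  have := congr1 (mulmx^~ (1 - P)) zK0; rewrite /= mul0mx -mulmxA /K.
  by rewrite mulmxDl PLQ0 QQ add0r.
have zP : z *m P = z by rewrite -{2}[z]mulmx1 -(subrK P 1%:M) mulmxDr zQ0 add0r.
exists z => //; split => //.
by move: zK0; rewrite /K mulmxDr zQ0 addr0 mulmxA zP.
Qed.
End LeftKernel.

Lemma connect_preserved (T : finType) (e : rel T) (p : pred T) x y :
  (forall a b, e a b -> p a -> p b) -> connect e x y -> p x -> p y.
Proof.
move=> e_p /connectP[s e_s ->]; elim: s x e_s => //= a s IHs x /andP[e_xa e_s] px.
exact: IHs e_s (e_p _ _ e_xa px).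
Qed.

Lemma expmx_unreachable (F : pzRingType) n (e : rel 'I_n) (M : 'M[F]_n) k i a :
  (forall a b, a != b -> ~~ e b a -> M a b = 0) ->
  ~~ connect e i a -> (M ^+ k) a i = 0.
Proof.
move=> M_e; elim: k a => [|k IHk] a not_ia.
  by rewrite mxE; case: eqP => // ai; rewrite ai connect0 in not_ia.
rewrite exprS mxE; apply: big1 => b _.
have [ib|not_ib] := boolP (connect e i b); last by rewrite IHk // mulr0.
rewrite M_e ?mul0r //; first by apply: contraNneq not_ia => ->.
by apply: contraNN not_ia => e_ba; apply: connect_trans ib (connect1 e_ba).
Qed.

Section SignedLaplacian.
Variables (R : realType) (n : nat) (A : 'M[R]_n).

Lemma laplacian_offdiag i j : i != j -> laplacian A i j = - A i j.
Proof. by move=> /negPf ij; rewrite mxE ij mul0r sub0r. Qed.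

Lemma laplacian_row_sum i : \sum_j laplacian A i j = 0.
Proof.
under eq_bigr do rewrite mxE.
rewrite sumrB (bigD1 i) //= eqxx mul1r [X in _ + X - _]big1 ?addr0 ?subrr // => j /negPf.
by rewrite eq_sym => ->; rewrite mul0r.
Qed.

Definition ancestors (y : 'I_n) : {set 'I_n} := [set k | connect (edge A) k y].

Lemma laplacian_ancestors_closed y i j :
  i \in ancestors y -> j \notin ancestors y -> laplacian A i j = 0.
Proof.
rewrite !inE => iy not_jy.
rewrite laplacian_offdiag; last by apply: contraNneq not_jy => <-.
apply/eqP; rewrite oppr_eq0; apply: contraNT not_jy => A_ij.
exact: connect_trans (connect1 A_ij) iy.
Qed.

Lemma ancestors_sub x c : c \in ancestors x -> ancestors c \subset ancestors x.
Proof. by rewrite inE => cx; apply/fintype.subsetP => k; rewrite !inE => /connect_trans; apply. Qed.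

Lemma left_kernel_on_ancestors y :
  exists2 w : 'rV[R]_n, w != 0 &
    w *m laplacian A = 0 /\ forall c, c \notin ancestors y -> w 0 c = 0.
Proof.
have L_closed := @laplacian_ancestors_closed y; have L_row := laplacian_row_sum.
set L := laplacian A in L_closed L_row *; clearbody L.
pose P := diag_mx (\row_i (i \in ancestors y)%:R : 'rV[R]_n).
have P2 : P *m P = P.
  apply/matrixP => i j; rewrite mul_diag_mx !mxE.
  by case: (i \in ancestors y); case: (i == j); rewrite ?mulr1n ?mulr0n ?mul1r ?mulr0 ?mul0r.
have PLQ0 : P *m L *m (1 - P) = 0.
  apply/matrixP => i j; rewrite mulmxBr mulmx1 mul_diag_mx mul_mx_diag !mxE.
  have [iy|not_iy] := boolP (i \in ancestors y); last by rewrite !mul0r subrr.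
  have [jy|not_jy] := boolP (j \in ancestors y); first by rewrite mulr1 subrr.
  by rewrite L_closed // !mulr0 subrr.
have L1 : L *m (const_mx 1 : 'cV[R]_n) = 0.
  by apply/colP => i; rewrite !mxE -[RHS](L_row i); apply: eq_bigr => j _; rewrite mxE mulr1.
have P1 : P *m (const_mx 1 : 'cV[R]_n) != 0.
  apply/negP => /eqP/colP/(_ y); rewrite mul_diag_mx !mxE inE connect0 mulr1.
  by move/eqP; rewrite oner_eq0.
have [w w_neq0 [wL0 wP]] := left_kernel_supported P2 PLQ0 L1 P1.
exists w => //; split => // c not_cy.
by rewrite -wP mul_mx_diag !mxE (negPf not_cy) mulr0.
Qed.

Lemma expmx_entry_eq0 (M : 'M[R]_n) t i j :
  (forall k, (M ^+ k) i j = 0) -> expmx_entry M t i j = 0.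
Proof.
move=> Mk0; rewrite /expmx_entry.
have -> : (fun N : nat => \sum_(k < N) t ^+ k / k`!%:R * (M ^+ k) i j) = fun=> 0.
  by apply: funext => N; apply: big1 => k _; rewrite Mk0 mulr0.
exact: norm_lim_cst.
Qed.

Lemma strongly_connected_irreducible :
  strongly_connected A -> irreducible_mx (laplacian A).
Proof.
move=> A_sc [s [k [k_gt0 k_lt_n Lk0]]].
pose x := s (Ordinal (ltn_trans k_gt0 k_lt_n)); pose y := s (Ordinal k_lt_n).
suff : ((s^-1)%g y < k)%N by rewrite permK ltnn.
apply: (connect_preserved (p := fun v => ((s^-1)%g v < k)%N) _ (A_sc x y)); last by rewrite permK.
move=> a b A_ba a_lt_k; rewrite ltnNge; apply/negP => b_ge_k.
have := Lk0 _ _ b_ge_k a_lt_k; rewrite !permKV laplacian_offdiag.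
  by move/eqP; rewrite oppr_eq0 (negPf A_ba).
by apply: contraTneq a_lt_k => <-; rewrite -leqNgt.
Qed.

Lemma corank1_rooted_spanning_tree :
  corank (laplacian A) = 1%N -> has_rooted_spanning_tree A.
Proof.
move=> corank1; have n_gt0 : (0 < n)%N.
  by apply: leq_trans (leq_subr (\rank (laplacian A)) n); rewrite -/(corank _) corank1.
have [x _ x_min] := arg_minnP (fun x => #|ancestors x|) (isT : predT (Ordinal n_gt0)).
exists x => i; apply/idPn => not_xi.
have [w1 w1_neq0 [w1L0 w1_supp]] := left_kernel_on_ancestors x.
have [w2 /rV0Pn[c w2c_neq0] [w2L0 w2_supp]] := left_kernel_on_ancestors i.
have [a w2_eq] := left_kernel_colinear corank1 w1_neq0 w1L0 w2L0.
have ci : c \in ancestors i by apply: contraNT w2c_neq0 => /w2_supp ->.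
have cx : c \in ancestors x.
  by apply: contraNT w2c_neq0 => /w1_supp w1c0; rewrite w2_eq mxE w1c0 mulr0.
have /eqP anc_cx : ancestors c == ancestors x.
  by rewrite eqEcard ancestors_sub ?x_min.
have : x \in ancestors c by rewrite anc_cx inE connect0.
rewrite !inE in ci * => xc; case/negP: not_xi; exact: connect_trans xc ci.
Qed.

Lemma EEP_strongly_connected : EEP (- laplacian A) -> strongly_connected A.
Proof.
move=> [t0 [_ expLt_pos]] i j; apply/idPn => not_ij.
have := expLt_pos t0 (lexx t0) j i; rewrite expmx_entry_eq0 ?ltxx // => k.
apply: (expmx_unreachable (e := edge A)) not_ij => a b ab not_ba.
by rewrite mxE laplacian_offdiag // opprK; apply/eqP; rewrite negbK in not_ba.
Qed.

Lemma balanced_corank1_strongly_connected :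
  weight_balanced (laplacian A) -> corank (laplacian A) = 1%N ->
  strongly_connected A.
Proof.
move=> balanced corank1 i j; apply/idPn => not_ij.
have [w w_neq0 [wL0 w_supp]] := left_kernel_on_ancestors j.
have one_neq0 : (const_mx 1 : 'rV[R]_n) != 0 by apply/rV0Pn; exists i; rewrite mxE oner_eq0.
have oneL0 : (const_mx 1 : 'rV[R]_n) *m laplacian A = 0.
  by apply/rowP => k; rewrite !mxE -[RHS](balanced k); apply: eq_bigr => l _; rewrite mxE mul1r.
have [a w_eq] := left_kernel_colinear corank1 one_neq0 oneL0 wL0.
have /eqP : w 0 i = 0 by apply: w_supp; rewrite inE.
rewrite w_eq !mxE mulr1 => /eqP a0.
by move: w_neq0; rewrite w_eq a0 scale0r eqxx.
Qed.

End SignedLaplacian.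

Theorem lemma5 (R : realType) (n : nat) (A : 'M[R]_n) :
  (corank (laplacian A) = 1%N -> has_rooted_spanning_tree A) /\
  (EEP (- laplacian A) \/
     (weight_balanced (laplacian A) /\ corank (laplacian A) = 1%N) ->
   irreducible_mx (laplacian A) /\ strongly_connected A).
Proof.
split=> [|hyp]; first exact: corank1_rooted_spanning_tree.
have A_sc : strongly_connected A.
  case: hyp => [/EEP_strongly_connected //|[]].
  exact: balanced_corank1_strongly_connected.
by split=> //; apply: strongly_connected_irreducible.
Qed.
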